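(* Let $v$ be the vertex of $\mathcal H^\dagger$ with coordinates $(m,n)\in\mathbb Z^2$, and let $T'$ be the image of $\mathcal H^\dagger$ under the map $\psi'$ constructed exactly as $\psi_{\lambda\Delta}$ (same flow $\phi^\dagger$), except that the additive constant is fixed by $\psi'(v)=0$ instead of $\psi=0$ at the dual vertex just to the left of $\mathcal H_1$. Then $T'=T_{\lambda'\Delta}$ with $$\lambda'=\lambda\Big(\tfrac{\beta}{\gamma}\Big)^{m}\Big(\tfrac{\beta}{\alpha}\Big)^{n}.$$ In particular, if $\lambda$ is chosen uniformly at random on the unit circle, the law of the random T-graph $T_{\lambda\Delta}$ is invariant under the lattice translations of $\mathcal H$ (i.e. under re-centring the construction at any dual vertex).
   Context: Setup. Let $\mathcal H$ be the hexagonal lattice embedded in the plane with one third of its edges vertical, with its vertices properly 2-coloured black/white. Let $e_1,e_2$ be two vectors generating its translation group and $\mathcal H_1$ a fundamental domain consisting of one vertical edge with its white top endpoint and black bottom endpoint. Each vertex $v$ has coordinates $(m(v),n(v))\in\mathbb Z^2$, the unique pair with $v-m e_1-n e_2\in\mathcal H_1$; thus $w(m,n)$ (white) and $b(m,n)$ (black) are the two endpoints of a vertical edge. $\mathcal H^\dagger$ denotes the dual triangular lattice; a face of $\mathcal H^\dagger$ is black or white according to the vertex of $\mathcal H$ it contains; a vertex $v$ of $\mathcal H^\dagger$ (a hexagonal face of $\mathcal H$) has coordinates $(m(v),n(v))$ equal to the common coordinates of the two vertices of that hexagon located just to the right of $v$. Fix $p_a,p_b,p_c\in(0,1)$ with $p_a+p_b+p_c=1$,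 a triangle $\Delta$ in $\mathbb C$ with vertices $A,B,C$ and angles $\pi p_a,\pi p_b,\pi p_c$, and set $\alpha=C-B$, $\beta=A-C$, $\gamma=B-A$ (so $\alpha+\beta+\gamma=0$). For $\lambda\in\mathbb C$ with $|\lambda|=1$ define, for adjacent white $w$ and black $b$, $$\phi(wb)=\Re\Big(\lambda^{-1}(\tfrac{\beta}{\gamma})^{-m(w)}(\tfrac{\beta}{\alpha})^{-n(w)}\Big)\,\alpha\,\lambda\,(\tfrac{\beta}{\gamma})^{m(b)}(\tfrac{\beta}{\alpha})^{n(b)},\qquad \phi(bw)=-\phi(wb).$$ The dual flow $\phi^\dagger$ assigns to the oriented edge of $\mathcal H^\dagger$ crossing $wb$ with $w$ on its left the value $\phi(wb)$; it has zero circulation around every triangle, so there is a function $\psi=\psi_{\lambda\Delta}$ on vertices of $\mathcal H^\dagger$ with $\psi(v')-\psi(v)=\phi^\dagger(vv')$, normalised by $\psi=0$ at the dual vertex just to the left of $\mathcal H_1$. Extending $\psi$ affinely on edges, $T_{\lambda\Delta}=\psi(\mathcal H^\dagger)\subset\mathbb C$ is called the T-graph with parameters $\Delta,\lambda$. *)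

(* The complex plane is modelled by an arbitrary
   numClosedFieldType C (e.g. algC, or the complex numbers). *)
From HB Require Import structures.
From mathcomp Require Import all_boot all_order all_algebra.
Set Implicit Arguments. Unset Strict Implicit. Unset Printing Implicit Defensive.
Import Order.TTheory GRing.Theory Num.Theory.
Local Open Scope ring_scope.

(* Conventions:
   - w(m,n), b(m,n) are the white/black endpoints of the vertical edge of
     cell (m,n).  b(m,n) is adjacent to w(m,n), w(m+1,n), w(m,n+1)
     (forced by zero circulation of phi^dagger).
   - The dual vertex (hexagonal face) with coordinates (m,n) is the face
     whose right side is the vertical edge (m,n); it is encoded as the pair
     (m,n) : int * int.  The dual vertex just left of H_1 is (0,0).
   - The three edges at b(m,n), with dual edges oriented with w on the left:
       w(m,n)b(m,n)     : face (m,n)     -> face (m+1,n-1)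
       w(m+1,n)b(m,n)   : face (m+1,n-1) -> face (m+1,n)
       w(m,n+1)b(m,n)   : face (m+1,n)   -> face (m,n)                    *)

Section Tgraph.
Variable C : numClosedFieldType.

Definition phi (al be ga lam : C) (mw nw mb nb : int) : C :=
  'Re (lam^-1 * (be / ga) ^ (- mw) * (be / al) ^ (- nw))
    * al * lam * (be / ga) ^ mb * (be / al) ^ nb.

Definition is_dual_potential (al be ga lam : C) (psi : int * int -> C) : Prop :=
  forall m n : int,
    [/\ psi (m + 1, n - 1) - psi (m, n) = phi al be ga lam m n m n,
        psi (m + 1, n) - psi (m + 1, n - 1) = phi al be ga lam (m + 1) n m n
      & psi (m, n) - psi (m + 1, n) = phi al be ga lam m (n + 1) m n].

Definition segment (x y z : C) : Prop :=
  exists t : C, [/\ t \is Num.real, 0 <= t, t <= 1 & z = x + t * (y - x)].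

Definition Timage (psi : int * int -> C) (z : C) : Prop :=
  exists m n : int,
    [\/ segment (psi (m, n)) (psi (m + 1, n - 1)) z,
        segment (psi (m + 1, n - 1)) (psi (m + 1, n)) z
      | segment (psi (m + 1, n)) (psi (m, n)) z].

(* The T-graph T_{lam Delta} (with psi = 0 at the dual vertex (0,0)) is
   Timage psi for psi satisfying is_dual_potential al be ga lam psi and
   psi (0,0) = 0.  A recentred version uses psi (m,n) = 0 instead. *)

End Tgraph.

From HB Require Import structures.
From mathcomp Require Import all_boot all_order all_algebra.
From mathcomp Require Import ring.
Import Order.TTheory GRing.Theory Num.Theory.
Local Open Scope ring_scope.

(* With [W(k,l) = (be/ga)^k (be/al)^l], the flow across an edge [wb] is
   [al/2 (W_b/W_w + lam/lam^* W_b/W_w^* )], and an explicit primitive is affine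
   in [(k,l)] plus a multiple of the phase [W/W^*].  Translating the lattice by
   [(m,n)] multiplies every [W] by [W(m,n)], which is absorbed by
   [lam' = lam W(m,n)]; as a dual potential is determined by its flow up to an
   additive constant, the translate of the potential of [lam] vanishing at
   [(m,n)] is the potential of [lam'] vanishing at the origin.  Since [phi] only
   depends on the direction of [lam], the map [lam |-> lam'] acts on the unit
   circle as the rotation by [W(m,n)/|W(m,n)|]. *)

Lemma int_shift_invariant_const (T : Type) (f : int -> T) :
  (forall k, f (k + 1) = f k) -> forall k, f k = f 0.
Proof.
move=> fS; elim/int_ind => [//|k IHk|k IHk].
  by rewrite -addn1 PoszD fS.
by rewrite -IHk -[in RHS](subrK 1 (- k%:Z)) fS -addn1 PoszD opprD.
Qed.

Section DualPotential.
Context {C : numClosedFieldType}.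
Implicit Types (al be ga lam : C) (psi : int * int -> C) (k l m n : int).

Lemma dual_potential_unique {al be ga lam psi1 psi2} :
  is_dual_potential al be ga lam psi1 -> is_dual_potential al be ga lam psi2 ->
  psi1 (0, 0) = psi2 (0, 0) -> psi1 =1 psi2.
Proof.
move=> H1 H2 eq00 [k l]; apply/eqP; rewrite -subr_eq0; apply/eqP.
pose D p := psi1 p - psi2 p.
have eqD p q : psi1 q - psi1 p = psi2 q - psi2 p -> D q = D p.
  by move=> e; rewrite /D -[psi1 q](subrK (psi1 p)) e; ring.
have DS1 a b : D (a + 1, b) = D (a, b).
  by have [_ _ e1] := H1 a b; have [_ _ e2] := H2 a b; apply/esym/eqD; rewrite e1 e2.
have DS2 a b : D (a, b + 1) = D (a, b).
  have [_ e1 _] := H1 (a - 1) (b + 1); have [_ e2 _] := H2 (a - 1) (b + 1).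
  by rewrite subrK addrK in e1 e2; apply: eqD; rewrite e1 e2.
rewrite -/(D (k, l)) (@int_shift_invariant_const _ (fun a => D (a, l)) (DS1^~ l)).
by rewrite (@int_shift_invariant_const _ (fun b => D (0, b)) (DS2 0)) /D eq00 subrr.
Qed.

Lemma eq_Timage {psi1 psi2} z : psi1 =1 psi2 -> Timage psi1 z <-> Timage psi2 z.
Proof. by move=> E; split=> -[k [l seg]]; exists k, l; rewrite ?E // -!E. Qed.

Lemma Timage_shift psi m n z :
  Timage (fun p => psi (p.1 + m, p.2 + n)) z <-> Timage psi z.
Proof.
split=> -[k [l seg]].
  by exists (k + m), (l + n); rewrite /= (addrAC k 1 m) (addrAC l (-1) n) in seg.
exists (k - m), (l - n); rewrite /= (addrAC (k - m) 1 m) (addrAC (l - n) (-1) n).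
by rewrite !subrK.
Qed.

Lemma phi_scale_real al be ga lam t mw nw mb nb :
  t \is Num.real -> t != 0 ->
  phi al be ga (t * lam) mw nw mb nb = phi al be ga lam mw nw mb nb.
Proof.
move=> t_real t0; rewrite /phi !ReE !invfM !rmorphM /= !fmorphV /= (conj_Creal t_real).
have [->|lam0] := eqVneq lam 0; first by rewrite !(mulr0, mul0r, invr0, conjC0).
by field; rewrite conjC_eq0 lam0 t0.
Qed.

Lemma dual_potential_scale_real {al be ga lam psi} t :
  t \is Num.real -> t != 0 ->
  is_dual_potential al be ga (t * lam) psi -> is_dual_potential al be ga lam psi.
Proof. by move=> t_real t0 H k l; have := H k l; rewrite !phi_scale_real. Qed.

Section Translation.
Context {al be ga : C}.
Hypotheses (al0 : al != 0) (be0 : be != 0) (ga0 : ga != 0).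

Lemma phi_shift lam m n k l k' l' :
  phi al be ga lam (k + m) (l + n) (k' + m) (l' + n) =
  phi al be ga (lam * (be / ga) ^ m * (be / al) ^ n) k l k' l'.
Proof.
have r0 : be / ga != 0 by rewrite mulf_neq0 ?invr_eq0.
have s0 : be / al != 0 by rewrite mulf_neq0 ?invr_eq0.
rewrite /phi.
have -> : lam^-1 * (be / ga) ^ (- (k + m)) * (be / al) ^ (- (l + n))
    = (lam * (be / ga) ^ m * (be / al) ^ n)^-1 * (be / ga) ^ (- k) * (be / al) ^ (- l).
  by rewrite !opprD !expfzDr // -!invr_expz !invfM; ring.
by rewrite !expfzDr //; ring.
Qed.

Lemma dual_potential_shift {lam psi} m n :
  is_dual_potential al be ga lam psi ->
  is_dual_potential al be ga (lam * (be / ga) ^ m * (be / al) ^ n)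
    (fun p => psi (p.1 + m, p.2 + n)).
Proof.
move=> H k l /=; have [e1 e2 e3] := H (k + m) (l + n).
rewrite -!phi_shift (addrAC k 1 m) (addrAC l 1 n) (addrAC l (-1) n).
by split.
Qed.

Lemma Timage_recentre {lam psi' psi m n} z :
  is_dual_potential al be ga lam psi' -> psi' (m, n) = 0 ->
  is_dual_potential al be ga (lam * (be / ga) ^ m * (be / al) ^ n) psi ->
  psi (0, 0) = 0 ->
  Timage psi' z <-> Timage psi z.
Proof.
move=> H' e' H e.
have shiftE : (fun p => psi' (p.1 + m, p.2 + n)) =1 psi.
  by apply: (dual_potential_unique (dual_potential_shift m n H') H); rewrite /= !add0r e' e.
by rewrite -(eq_Timage z shiftE) Timage_shift.
Qed.

End Translation.

Lemma triangle_sides_neq0 {al be ga} :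
  al + be + ga = 0 -> be * al^* != al * be^* -> [/\ al != 0, be != 0 & ga != 0].
Proof.
move=> /eqP; rewrite addrC addr_eq0 => /eqP -> nondeg; rewrite oppr_eq0.
split; apply: contraNneq nondeg; first by move=> ->; rewrite conjC0 !(mulr0, mul0r).
  by move=> ->; rewrite conjC0 !(mulr0, mul0r).
by move=> /eqP; rewrite addr_eq0 => /eqP ->; rewrite rmorphN mulrN mulNr.
Qed.

Definition cell_weight al be ga (p : int * int) : C := (be / ga) ^ p.1 * (be / al) ^ p.2.

(* The affine part integrates the terms [al/2 W_b/W_w], which only depend on the
   edge type, and the phase term the terms [al/2 lam/lam^* W_b/W_w^*]; the
   denominator [ga^* al - al^* ga] vanishes iff the triangle is degenerate. *)
Definition tgraph_potential al be ga lam (p : int * int) : C :=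
  - al ^+ 2 / (2 * be) * p.1%:~R + al * ga / (2 * be) * p.2%:~R
  + lam / lam^* * al * al^* * ga / (2 * (ga^* * al - al^* * ga))
    * (cell_weight al be ga p / (cell_weight al be ga p)^* - 1).

Lemma tgraph_potential00 al be ga lam : tgraph_potential al be ga lam (0, 0) = 0.
Proof. by rewrite /tgraph_potential /cell_weight /= !expr0z mulr1 conjC1 divr1 subrr !mulr0 !addr0. Qed.

Section Existence.
Context {al be ga lam : C}.
Hypotheses (triangle : al + be + ga = 0) (nondeg : be * al^* != al * be^*).
Hypothesis lam0 : lam != 0.

Local Notation W := (cell_weight al be ga).

Let sides0 := triangle_sides_neq0 triangle nondeg.
Let r0 : be / ga != 0. Proof. by have [_ ? ?] := sides0; rewrite mulf_neq0 ?invr_eq0. Qed.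
Let s0 : be / al != 0. Proof. by have [? ? _] := sides0; rewrite mulf_neq0 ?invr_eq0. Qed.

Lemma cell_weight_neq0 p : W p != 0.
Proof. by rewrite mulf_neq0 ?expfz_neq0. Qed.

Lemma cell_weightS1 k l : W (k + 1, l) = be / ga * W (k, l).
Proof. by rewrite /cell_weight /= expfzDr // expr1z; ring. Qed.

Lemma cell_weightS2 k l : W (k, l + 1) = be / al * W (k, l).
Proof. by rewrite /cell_weight /= expfzDr // expr1z; ring. Qed.

Lemma phi_cell_weightE mw nw mb nb :
  phi al be ga lam mw nw mb nb =
  al / 2 * (W (mb, nb) / W (mw, nw) + lam / lam^* * (W (mb, nb) / (W (mw, nw))^*)).
Proof.
rewrite /phi /cell_weight /= ReE -!invr_expz !rmorphM /= !fmorphV /= !invfM.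
by field; rewrite !conjC_eq0 lam0 !expfz_neq0.
Qed.

Lemma tgraph_potential_dual : is_dual_potential al be ga lam (tgraph_potential al be ga lam).
Proof.
move=> k l.
have WS3 : W (k + 1, l - 1) = (be / ga) / (be / al) * W (k, l).
  by rewrite -[in RHS](subrK 1 l) cell_weightS2 cell_weightS1 mulrA divfK.
have WS4 : W (k + 1, l) = be / al * W (k + 1, l - 1) by rewrite -cell_weightS2 subrK.
rewrite !phi_cell_weightE /tgraph_potential /= WS4 WS3 cell_weightS2 !(intrD, intrB).
move: (cell_weight_neq0 (k, l)); move: (W (k, l)) => X X0.
have [al0 be0 _] := sides0.
have gaE : ga = - (al + be) by apply/eqP; rewrite -addr_eq0 addrC triangle.
rewrite gaE ?(rmorphM, fmorphV, rmorphN, rmorphD) /=.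
have Xc0 : X^* != 0 by rewrite conjC_eq0.
have alc0 : al^* != 0 by rewrite conjC_eq0.
have bec0 : be^* != 0 by rewrite conjC_eq0.
have ab0 : al + be != 0 by rewrite -oppr_eq0 -gaE; case: sides0.
have abc0 : al^* + be^* != 0 by rewrite -rmorphD conjC_eq0.
have lamc0 : lam^* != 0 by rewrite conjC_eq0.
have nondeg' : - (al^* + be^*) * al - al^* * - (al + be) != 0.
  by rewrite (_ : _ - _ = be * al^* - al * be^*) ?subr_eq0 //; ring.
by split; field; rewrite ?X0 ?Xc0 ?al0 ?be0 ?ab0 ?alc0 ?bec0 ?abc0 ?lam0 ?lamc0 ?nondeg'.
Qed.
End Existence.

Lemma triangle_nondegenerate {A B C0 : C} : 'Im ((B - A) * (C0 - A)^*) != 0 ->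
  (A - C0) * (C0 - B)^* != (C0 - B) * (A - C0)^*.
Proof.
apply: contraNneq => /eqP; rewrite -subr_eq0 => /eqP cross0.
rewrite ImE; have -> : ((B - A) * (C0 - A)^*)^* - (B - A) * (C0 - A)^*
    = (A - C0) * (C0 - B)^* - (C0 - B) * (A - C0)^*.
  by rewrite !rmorphM !rmorphB /= !conjCK; ring.
by rewrite cross0 mulr0 mul0r.
Qed.

End DualPotential.

Theorem mainTheorem1 (C : numClosedFieldType) (A B C0 : C)
    (hDelta : 'Im ((B - A) * (C0 - A)^*) != 0)
    (lam : C) (hlam : `|lam| = 1) (m n : int) :
  let al := C0 - B in let be := A - C0 in let ga := B - A in
  let lam' := lam * (be / ga) ^ m * (be / al) ^ n in
  (exists psi, is_dual_potential al be ga lam' psi /\ psi (0, 0) = 0) /\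
  (* T' = T_{lam' Delta} *)
  (forall psi' psi : int * int -> C,
     is_dual_potential al be ga lam psi' -> psi' (m, n) = 0 ->
     is_dual_potential al be ga lam' psi -> psi (0, 0) = 0 ->
     forall z, Timage psi' z <-> Timage psi z) /\
  (* in particular: recentring at (m,n) acts on unimodular lambda as a
     fixed rotation u of the unit circle (so the uniform law is preserved) *)
  (exists u : C, `|u| = 1 /\
     forall mu : C, `|mu| = 1 ->
     forall psi' psi : int * int -> C,
       is_dual_potential al be ga mu psi' -> psi' (m, n) = 0 ->
       is_dual_potential al be ga (u * mu) psi -> psi (0, 0) = 0 ->
       forall z, Timage psi' z <-> Timage psi z).
Proof.
move=> al be ga lam'.
have triangle : al + be + ga = 0 by rewrite /al /be /ga; ring.
have nondeg := triangle_nondegenerate hDelta.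
have [al0 be0 ga0] := triangle_sides_neq0 triangle nondeg.
pose w := cell_weight al be ga (m, n).
have w0 : w != 0 := cell_weight_neq0 triangle nondeg (m, n).
have lam0 : lam != 0 by rewrite -normr_eq0 hlam oner_eq0.
split; [|split].
- exists (tgraph_potential al be ga lam'); split; last exact: tgraph_potential00.
  by apply: tgraph_potential_dual; rewrite // /lam' -mulrA mulf_neq0.
- by move=> psi' psi H' e' H e z; apply: (Timage_recentre al0 be0 ga0 z H' e' H e).
exists (w / `|w|); split; first by rewrite normf_div normr_id divff ?normr_eq0.
move=> mu _ psi' psi H' e' H e z; apply: (Timage_recentre al0 be0 ga0 z H' e' _ e).
apply: (dual_potential_scale_real `|w|^-1); rewrite ?rpredV ?normr_real //.
  by rewrite invr_eq0 normr_eq0.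
suff -> : `|w|^-1 * (mu * (be / ga) ^ m * (be / al) ^ n) = w / `|w| * mu by [].
by rewrite /w /cell_weight /=; ring.
Qed.
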